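(* For integers $r,k\ge0$ and real $\alpha$ with $\alpha>k>r$, $$\sum_{n=1}^\infty\frac{H_{n+\alpha}^2+H_{n+\alpha}^{(2)}}{(n+r)(n+k)}=\frac{k-\alpha}{k-r}\left\{\frac{H_{\alpha-k}^3+3H_{\alpha-k}H_{\alpha-k}^{(2)}+2H_{\alpha-k}^{(3)}}{\alpha-k}-\sum_{j=1}^k\frac{H_{\alpha+j-k}^2+H_{\alpha+j-k}^{(2)}}{j(\alpha+j-k)}\right\}$$ $$+\frac{\alpha-r}{k-r}\left\{\frac{H_{\alpha-r}^3+3H_{\alpha-r}H_{\alpha-r}^{(2)}+2H_{\alpha-r}^{(3)}}{\alpha-r}-\sum_{j=1}^r\frac{H_{\alpha+j-r}^2+H_{\alpha+j-r}^{(2)}}{j(\alpha+j-r)}\right\}.$$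
   Context: Shifted harmonic numbers: for a real $\alpha$ that is not a negative integer, $H_\alpha := \sum_{k=1}^\infty\left(\frac1k-\frac1{k+\alpha}\right)$ and, for integers $m\ge 2$, $H_\alpha^{(m)} := \sum_{k=1}^\infty\left(\frac1{k^m}-\frac1{(k+\alpha)^m}\right)=\zeta(m)-\zeta(m,\alpha+1)$, where $\zeta$ is the Riemann zeta function and $\zeta(s,\alpha+1)=\sum_{n=1}^\infty (n+\alpha)^{-s}$ is the Hurwitz zeta function. Powers such as $H_\alpha^2$ mean $(H_\alpha)^2$. Empty sums are $0$. *)

From Stdlib Require Import Reals ClassicalEpsilon.
Open Scope R_scope.

(* Value of a convergent series sum_{k>=0} f k (classical choice; only
   meaningful when the series converges, which is the case for all uses). *)
Definition series_value (f : nat -> R) : R :=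
  epsilon (inhabits 0) (fun l => infinite_sum f l).

Definition Hm (m : nat) (alpha : R) : R :=
  series_value (fun k => 1 / (INR (S k)) ^ m - 1 / (INR (S k) + alpha) ^ m).

Definition H (alpha : R) : R := Hm 1 alpha.

Fixpoint sum1 (n : nat) (g : nat -> R) : R :=
  match n with O => 0 | S p => sum1 p g + g (S p) end.

(* Write Q(y) = H_y^2 + H^(2)_y ([Hquad]) and C(y) = H_y^3 + 3 H_y H^(2)_y + 2 H^(3)_y
   ([Hcube]).  First, for x > 0,
     sum_{m>=1} Q(x+m) / (m(m+1)) = (x+2) Q(x) / x:
   expand Q(x+m) through H_{x+m} = H_x + sum_{i<=m} 1/(x+i) and sum by parts against
   1/m - 1/(m+1); the boundary terms are O(H_N^2 / N), which vanishes by Cesaro, and the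
   single remaining error term is at most 2 H_N / (N+1).  Second, C(c+1) = C(c) + 3 Q(c+1)/(c+1),
   the cubic analogue of H_{c+1} = H_c + 1/(c+1).  Shifting the first identity by j and using
   the second, sum_n Q(n+alpha) / ((n+j)(n+j+1)) = G(j) - G(j+1), where G(j) is alpha - j times
   the bracket of the theorem at j.  The partial fractions
   1/((n+r)(n+k)) = 1/(k-r) sum_{r<=j<k} 1/((n+j)(n+j+1)) then telescope to the claim. *)

From Stdlib Require Import Reals ClassicalEpsilon Lra Lia.
From Coquelicot Require Import Coquelicot.
Open Scope R_scope.

Lemma series_value_eq f l : infinite_sum f l -> series_value f = l.
Proof.
  intro Hl. apply (uniqueness_sum f); [|exact Hl].
  exact (epsilon_spec (inhabits 0) (infinite_sum f) (ex_intro _ l Hl)).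
Qed.

Lemma sum1_S n f : sum1 (S n) f = sum1 n f + f (S n).
Proof. reflexivity. Qed.

Lemma sum1_ext n f g :
  (forall j, (1 <= j <= n)%nat -> f j = g j) -> sum1 n f = sum1 n g.
Proof.
  induction n as [|n IH]; intro E; simpl; [reflexivity|].
  rewrite (E (S n)) by lia. rewrite IH by (intros; apply E; lia). reflexivity.
Qed.

Lemma sum1_const0 n : sum1 n (fun _ => 0) = 0.
Proof. induction n as [|n IH]; simpl; [reflexivity| rewrite IH; ring]. Qed.

Lemma sum1_plus n f g : sum1 n (fun j => f j + g j) = sum1 n f + sum1 n g.
Proof. induction n as [|n IH]; simpl; [lra| rewrite IH; lra]. Qed.

Lemma sum1_scal n c f : sum1 n (fun j => c * f j) = c * sum1 n f.
Proof. induction n as [|n IH]; simpl; [lra| rewrite IH; lra]. Qed.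

Lemma sum1_le n f g :
  (forall j, (1 <= j <= n)%nat -> f j <= g j) -> sum1 n f <= sum1 n g.
Proof.
  induction n as [|n IH]; intro E; simpl; [lra|].
  assert (f (S n) <= g (S n)) by (apply E; lia).
  assert (sum1 n f <= sum1 n g) by (apply IH; intros; apply E; lia). lra.
Qed.

Lemma sum1_succ_l n g : sum1 (S n) g = g 1%nat + sum1 n (fun j => g (S j)).
Proof.
  induction n as [|n IH]; [simpl; lra|].
  rewrite (sum1_S (S n) g), IH, sum1_S. lra.
Qed.

Lemma sum1_rev n f : sum1 n (fun j => f (S (n - j))) = sum1 n f.
Proof.
  revert f; induction n as [|n IH]; intro f; [reflexivity|].
  rewrite sum1_S, (sum1_ext n _ (fun j => f (S (S (n - j))))) by (intros; f_equal; lia).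
  rewrite (IH (fun j => f (S j))), Nat.sub_diag, sum1_succ_l. lra.
Qed.

Lemma sum1_shift N j g :
  sum1 N (fun n => g (n + j)%nat) = sum1 (N + j) g - sum1 j g.
Proof. induction N as [|N IH]; simpl; [lra| rewrite IH; lra]. Qed.

Lemma sum1_inv_mul_succ N :
  sum1 N (fun j => 1 / (INR j * INR (S j))) = 1 - 1 / INR (S N).
Proof.
  induction N as [|N IH]; [simpl; lra|].
  rewrite sum1_S, IH, !S_INR. pose proof (pos_INR N). field. lra.
Qed.

Lemma infinite_sum_of_sum1 g (l : R) :
  is_lim_seq (fun N => sum1 N g) l -> infinite_sum (fun n => g (S n)) l.
Proof.
  intro Hg. apply is_lim_seq_incr_1 in Hg. apply is_lim_seq_Reals.
  refine (is_lim_seq_ext _ _ _ _ Hg). intro N.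
  induction N as [|N IH]; [simpl; lra|]. simpl sum_f_R0. rewrite <- IH. reflexivity.
Qed.

Lemma is_lim_seq_inv_succ : is_lim_seq (fun N => / INR (S N)) 0.
Proof.
  apply (is_lim_seq_incr_1 (fun N => / INR N)).
  apply (is_lim_seq_inv _ p_infty); [exact is_lim_seq_INR| discriminate].
Qed.

Lemma is_lim_seq_0_le u v :
  (forall n, 0 <= u n <= v n) -> is_lim_seq v 0 -> is_lim_seq u 0.
Proof. intros Huv Hv. exact (is_lim_seq_le_le _ u v 0 Huv (is_lim_seq_const 0) Hv). Qed.

Lemma is_lim_seq_cesaro g (l : R) :
  is_lim_seq (fun j => g (S j)) l ->
  is_lim_seq (fun N => sum1 (S N) g / INR (S N)) l.
Proof.
  intro Hg. apply is_lim_seq_Reals, Cesaro_1, is_lim_seq_Reals, is_lim_seq_incr_1 in Hg.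
  refine (is_lim_seq_ext _ _ _ _ Hg). intro N. simpl Nat.pred. f_equal.
  induction N as [|N IH]; [simpl; lra|]. simpl sum_f_R0. rewrite IH. reflexivity.
Qed.

(** * Shifted harmonic numbers *)

Definition Hm_term (m : nat) (y : R) (j : nat) : R :=
  1 / INR j ^ m - 1 / (INR j + y) ^ m.

Definition Hpart (m : nat) (x : R) (N : nat) : R :=
  sum1 N (fun i => 1 / (x + INR i) ^ m).

Lemma Hpart_S m x N : Hpart m x (S N) = Hpart m x N + 1 / (x + INR (S N)) ^ m.
Proof. reflexivity. Qed.

Lemma INR_ge1 j : (1 <= j)%nat -> 1 <= INR j.
Proof. intro Hj. apply (le_INR 1). exact Hj. Qed.

Lemma Hm_term_bounds m y j : (1 <= m)%nat -> 0 <= y -> (1 <= j)%nat ->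
  0 <= Hm_term m y j <= (y + 1) / INR j ^ 2.
Proof.
  intros Hm1 Hy Hj. unfold Hm_term. pose proof (INR_ge1 j Hj) as Hn.
  set (n := INR j) in *.
  destruct m as [|[|p]]; [lia| |].
  - rewrite !pow_1.
    replace (1 / n - 1 / (n + y)) with (y / (n * (n + y))) by (field; lra).
    split.
    + apply Rdiv_le_0_compat; nra.
    + apply Rle_trans with (y / n ^ 2).
      * apply Rmult_le_compat_l; [lra|]. apply Rinv_le_contravar; nra.
      * apply Rmult_le_compat_r; [apply Rlt_le, Rinv_0_lt_compat; nra| lra].
  - assert (0 < n ^ S (S p)) by (apply pow_lt; lra).
    assert (n ^ S (S p) <= (n + y) ^ S (S p)) by (apply pow_incr; lra).
    assert (n ^ 2 <= n ^ S (S p)) by (apply Rle_pow; [lra| lia]).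
    assert (1 / (n + y) ^ S (S p) <= 1 / n ^ S (S p))
      by (apply Rmult_le_compat_l; [lra| apply Rinv_le_contravar; lra]).
    assert (1 / n ^ S (S p) <= 1 / n ^ 2)
      by (apply Rmult_le_compat_l; [lra| apply Rinv_le_contravar; nra]).
    assert (0 < 1 / (n + y) ^ S (S p)) by (apply Rdiv_lt_0_compat; lra).
    assert (0 < 1 / n ^ 2) by (apply Rdiv_lt_0_compat; nra).
    unfold Rdiv in *. split; nra.
Qed.

Lemma Hm_is_lim_seq m y : (1 <= m)%nat -> 0 <= y ->
  is_lim_seq (fun N => sum1 N (Hm_term m y)) (Hm m y).
Proof.
  intros Hm1 Hy.
  destruct (ex_finite_lim_seq_incr (fun N => sum1 N (Hm_term m y)) (2 * (y + 1)))
    as [l Hl].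
  - intro N. simpl. pose proof (Hm_term_bounds m y (S N) Hm1 Hy ltac:(lia)). lra.
  - intro N.
    apply Rle_trans with (sum1 N (fun j => 2 * (y + 1) * (1 / (INR j * INR (S j))))).
    + apply sum1_le. intros j Hj.
      pose proof (Hm_term_bounds m y j Hm1 Hy ltac:(lia)) as [_ Hb].
      pose proof (INR_ge1 j ltac:(lia)). rewrite S_INR.
      assert (E : 2 * (y + 1) * (1 / (INR j * (INR j + 1))) - (y + 1) / INR j ^ 2
                  = (y + 1) * (INR j - 1) / (INR j ^ 2 * (INR j + 1))) by (field; lra).
      assert (0 <= (y + 1) * (INR j - 1) / (INR j ^ 2 * (INR j + 1)))
        by (apply Rdiv_le_0_compat; nra).
      lra.
    + rewrite sum1_scal, sum1_inv_mul_succ.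
      assert (0 < 1 / INR (S N)) by (apply Rdiv_lt_0_compat; [lra| apply lt_0_INR; lia]).
      nra.
  - replace (Hm m y) with l; [exact Hl|].
    symmetry. apply (series_value_eq (fun n => Hm_term m y (S n))).
    exact (infinite_sum_of_sum1 _ _ Hl).
Qed.

Lemma Hm_succ m y : (1 <= m)%nat -> 0 <= y -> Hm m (y + 1) = Hm m y + 1 / (y + 1) ^ m.
Proof.
  intros Hm1 Hy.
  assert (Partial : forall N, sum1 N (Hm_term m (y + 1)) =
            sum1 N (Hm_term m y) + 1 / (y + 1) ^ m - 1 / (INR N + 1 + y) ^ m).
  { induction N as [|N IH].
    { replace (INR 0 + 1 + y) with (y + 1) by (simpl; ring). simpl; lra. }
    rewrite !sum1_S, IH. unfold Hm_term. rewrite S_INR.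
    replace (INR N + 1 + (y + 1)) with (INR N + 1 + 1 + y) by ring. lra. }
  assert (Tail : is_lim_seq (fun N => 1 / (INR N + 1 + y) ^ m) 0).
  { apply (is_lim_seq_0_le _ (fun N => / INR (S N))); [|exact is_lim_seq_inv_succ].
    intro N. rewrite S_INR. pose proof (pos_INR N).
    assert (INR N + 1 <= (INR N + 1 + y) ^ m).
    { apply Rle_trans with ((INR N + 1 + y) ^ 1); [rewrite pow_1; lra|].
      apply Rle_pow; [lra| exact Hm1]. }
    split; [apply Rdiv_le_0_compat; lra|].
    unfold Rdiv. rewrite Rmult_1_l. apply Rinv_le_contravar; lra. }
  pose proof (is_lim_seq_minus' _ _ _ _
    (is_lim_seq_plus' _ _ _ _ (Hm_is_lim_seq m y Hm1 Hy) (is_lim_seq_const (1 / (y + 1) ^ m)))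
    Tail) as Hlim.
  apply (is_lim_seq_ext _ _ _ (fun N => eq_sym (Partial N))) in Hlim.
  pose proof (Hm_is_lim_seq m (y + 1) Hm1 ltac:(lra)) as Hlim'.
  apply is_lim_seq_unique in Hlim, Hlim'. rewrite Hlim in Hlim'.
  injection Hlim' as E. lra.
Qed.

Lemma Hm_add_nat m x j : (1 <= m)%nat -> 0 <= x ->
  Hm m (x + INR j) = Hm m x + Hpart m x j.
Proof.
  intros Hm1 Hx. induction j as [|j IH].
  { simpl. rewrite Rplus_0_r. unfold Hpart. simpl. lra. }
  rewrite Hpart_S, !S_INR, <- (Rplus_assoc x), Hm_succ, IH; [ring| exact Hm1|].
  pose proof (pos_INR j). lra.
Qed.

(** * Harmonic numbers *)

Definition harm (N : nat) : R := sum1 N (fun j => 1 / INR j).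

Lemma harm_succ N : harm (S N) = harm N + 1 / INR (S N).
Proof. reflexivity. Qed.

Lemma inv_INR_succ_gt0 N : 0 < 1 / INR (S N).
Proof. apply Rdiv_lt_0_compat; [lra| apply lt_0_INR; lia]. Qed.

Lemma harm_ge0 N : 0 <= harm N.
Proof.
  induction N as [|N IH]; [unfold harm; simpl; lra|].
  rewrite harm_succ. pose proof (inv_INR_succ_gt0 N). lra.
Qed.

Lemma harm_add_bounds p q : 0 <= harm (p + q) - harm p <= INR q / INR (S p).
Proof.
  induction q as [|q IH].
  - rewrite Nat.add_0_r. simpl INR. unfold Rdiv. lra.
  - rewrite Nat.add_succ_r, harm_succ, (S_INR q).
    pose proof (inv_INR_succ_gt0 (p + q)).
    assert (1 / INR (S (p + q)) <= 1 / INR (S p)).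
    { apply Rmult_le_compat_l; [lra|].
      apply Rinv_le_contravar; [apply lt_0_INR; lia| apply le_INR; lia]. }
    replace ((INR q + 1) / INR (S p)) with (INR q / INR (S p) + 1 / INR (S p))
      by (unfold Rdiv; ring).
    lra.
Qed.

Lemma harm_le_succ N : harm N <= harm (S N).
Proof. rewrite harm_succ. pose proof (inv_INR_succ_gt0 N). lra. Qed.

Lemma div_INR_succ_bounds a b N : 0 <= a <= b ->
  0 <= a / INR (S N) <= b / INR (S N).
Proof.
  intro Hf. assert (0 < / INR (S N)) by (apply Rinv_0_lt_compat, lt_0_INR; lia).
  unfold Rdiv. split; [apply Rmult_le_pos|apply Rmult_le_compat_r]; lra.
Qed.

Lemma harm_div_succ_cv0 : is_lim_seq (fun N => harm N / INR (S N)) 0.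
Proof.
  assert (Hc : is_lim_seq (fun N => harm (S N) / INR (S N)) 0).
  { apply (is_lim_seq_cesaro (fun j => 1 / INR j)).
    apply (is_lim_seq_ext (fun N => / INR (S N))); [intro; unfold Rdiv; ring|].
    exact is_lim_seq_inv_succ. }
  refine (is_lim_seq_0_le _ _ _ Hc). intro N.
  apply div_INR_succ_bounds. split; [apply harm_ge0| apply harm_le_succ].
Qed.

Lemma harm_sqr N :
  harm N ^ 2 = sum1 N (fun j => 2 * harm (pred j) / INR j + 1 / INR j ^ 2).
Proof.
  induction N as [|N IH]; [unfold harm; simpl; lra|].
  rewrite sum1_S, <- IH, harm_succ. simpl pred. pose proof (inv_INR_succ_gt0 N).
  field. apply not_0_INR. lia.
Qed.

Lemma harm_sqr_div_succ_cv0 : is_lim_seq (fun N => harm N ^ 2 / INR (S N)) 0.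
Proof.
  assert (Hc : is_lim_seq (fun N => harm (S N) ^ 2 / INR (S N)) 0).
  { apply (is_lim_seq_ext
      (fun N => sum1 (S N) (fun j => 2 * harm (pred j) / INR j + 1 / INR j ^ 2) / INR (S N)));
      [intro; now rewrite harm_sqr|].
    apply is_lim_seq_cesaro. simpl pred.
    replace (Finite 0) with (Finite (2 * 0 + 0)) by (f_equal; ring).
    apply is_lim_seq_plus'.
    - apply (is_lim_seq_ext (fun N => 2 * (harm N / INR (S N)))); [intro; unfold Rdiv; ring|].
      apply (is_lim_seq_mult' _ _ _ _ (is_lim_seq_const 2) harm_div_succ_cv0).
    - apply (is_lim_seq_0_le _ (fun N => / INR (S N))); [|exact is_lim_seq_inv_succ].
      intro N. pose proof (INR_ge1 (S N) ltac:(lia)). split.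
      + apply Rdiv_le_0_compat; [lra| apply pow_lt; lra].
      + unfold Rdiv. rewrite Rmult_1_l. apply Rinv_le_contravar; nra. }
  refine (is_lim_seq_0_le _ _ _ Hc). intro N.
  apply div_INR_succ_bounds.
  pose proof (harm_ge0 N). pose proof (harm_le_succ N).
  split; [nra| apply pow_incr; lra].
Qed.

Lemma Hpart_bounds m x N : (1 <= m)%nat -> 0 <= x -> 0 <= Hpart m x N <= harm N.
Proof.
  intros Hm1 Hx. induction N as [|N IH]; [unfold Hpart, harm; simpl; lra|].
  rewrite Hpart_S, harm_succ.
  pose proof (INR_ge1 (S N) ltac:(lia)).
  assert (INR (S N) <= (x + INR (S N)) ^ m).
  { apply Rle_trans with ((x + INR (S N)) ^ 1); [rewrite pow_1; lra|].
    apply Rle_pow; [lra| exact Hm1]. }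
  assert (0 < 1 / (x + INR (S N)) ^ m) by (apply Rdiv_lt_0_compat; lra).
  assert (1 / (x + INR (S N)) ^ m <= 1 / INR (S N))
    by (apply Rmult_le_compat_l; [lra| apply Rinv_le_contravar; lra]).
  lra.
Qed.

(** * The series of [Hquad (x + m) / (m (m + 1))] *)

Definition Hquad (y : R) : R := H y ^ 2 + Hm 2 y.

Section HquadSeries.
Variable x : R.
Hypothesis hx : 0 < x.

Local Notation phi := (Hpart 1 x).
Local Notation psi := (Hpart 2 x).

(* Chosen so that [sum1_Hpart_mul_term] holds by induction on [N]. *)
Definition rem N :=
  sum1 N (fun n => 1 / (x + INR n) / INR n * (phi (pred n) - 1 / INR n)).

Lemma sum1_Hpart_div N :
  sum1 N (fun m => phi m / (INR m * INR (S m))) =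
  sum1 N (Hm_term 1 x) / x - phi N / INR (S N).
Proof.
  induction N as [|N IH]; [unfold Hpart; simpl; lra|].
  rewrite !sum1_S, IH, Hpart_S. unfold Hm_term.
  rewrite !S_INR. pose proof (pos_INR N). field. repeat split; lra.
Qed.

Lemma sum1_Hpart_sqr_div N :
  sum1 N (fun m => (phi m ^ 2 + psi m) / (INR m * INR (S m))) =
  2 / x * sum1 N (fun n => phi n * Hm_term 1 x n) - (phi N ^ 2 + psi N) / INR (S N).
Proof.
  induction N as [|N IH]; [unfold Hpart; simpl; lra|].
  rewrite !sum1_S, IH, !Hpart_S. unfold Hm_term.
  rewrite !S_INR. pose proof (pos_INR N). field. repeat split; lra.
Qed.

Lemma sum1_Hpart_mul_term N :
  sum1 N (fun n => phi n * Hm_term 1 x n) = sum1 N (Hm_term 2 x) + x * rem N.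
Proof.
  induction N as [|N IH]; [unfold rem; simpl; lra|].
  unfold rem in *. rewrite !sum1_S, IH, Hpart_S. simpl pred. unfold Hm_term.
  rewrite !S_INR. pose proof (pos_INR N). field. repeat split; lra.
Qed.

Lemma rem_eq_harm N :
  rem N = - sum1 N (fun m => (harm N - harm (N - m)) / (INR m * (x + INR m))).
Proof.
  induction N as [|N IH]; [unfold rem; simpl; lra|].
  unfold rem in *. rewrite sum1_S, IH, sum1_S, Nat.sub_diag. simpl pred.
  rewrite (sum1_ext N (fun m => (harm (S N) - harm (S N - m)) / (INR m * (x + INR m)))
     (fun m => (harm N - harm (N - m)) / (INR m * (x + INR m)) +
        - (1 / (INR (S N) * (x + INR (S N)))) * (1 / INR (S (N - m)) + 1 / (x + INR m)))).
  2:{ intros m Hm. replace (S N - m)%nat with (S (N - m)) by lia. rewrite !harm_succ.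
      assert (E : INR (S (N - m)) = INR N + 1 - INR m) by (rewrite S_INR, minus_INR by lia; lra).
      pose proof (INR_ge1 m ltac:(lia)). assert (INR m <= INR N) by (apply le_INR; lia).
      rewrite E, S_INR. field. repeat split; lra. }
  rewrite sum1_plus, sum1_scal, sum1_plus, (sum1_rev N (fun j => 1 / INR j)).
  fold (harm N). unfold Hpart. rewrite harm_succ.
  replace (harm 0) with 0 by reflexivity.
  rewrite (sum1_ext N (fun i => 1 / (x + INR i) ^ 1) (fun i => 1 / (x + INR i)))
    by (intros; now rewrite pow_1).
  rewrite !S_INR. pose proof (pos_INR N). field. repeat split; lra.
Qed.

Lemma rem_bound N : Rabs (rem N) <= 2 * harm N / INR (S N).
Proof.
  assert (Hterm : forall m, (1 <= m <= N)%nat ->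
     0 <= (harm N - harm (N - m)) / (INR m * (x + INR m)) <=
     1 / INR (S N) * (1 / INR m + 1 / INR (S (N - m)))).
  { intros m Hm. pose proof (harm_add_bounds (N - m) m) as Hh.
    replace (N - m + m)%nat with N in Hh by lia.
    pose proof (INR_ge1 m ltac:(lia)). assert (INR m <= INR N) by (apply le_INR; lia).
    assert (E : INR (S (N - m)) = INR N + 1 - INR m) by (rewrite S_INR, minus_INR by lia; lra).
    rewrite E in *. rewrite S_INR. set (q := INR N + 1 - INR m) in *.
    assert (1 <= q) by (unfold q; lra).
    replace (1 / (INR N + 1) * (1 / INR m + 1 / q)) with (1 / (INR m * q))
      by (unfold q; field; repeat split; lra).
    split; [apply Rdiv_le_0_compat; nra|].
    apply Rle_trans with (INR m / q / (INR m * (x + INR m))).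
    - apply Rmult_le_compat_r; [|lra].
      apply Rlt_le, Rinv_0_lt_compat, Rmult_lt_0_compat; lra.
    - replace (INR m / q / (INR m * (x + INR m))) with (1 / (q * (x + INR m)))
        by (field; repeat split; lra).
      apply Rmult_le_compat_l; [lra| apply Rinv_le_contravar; nra]. }
  rewrite rem_eq_harm, Rabs_Ropp, Rabs_pos_eq.
  - eapply Rle_trans; [apply sum1_le; intros j Hj; apply (Hterm j Hj)|].
    rewrite sum1_scal, sum1_plus, (sum1_rev N (fun j => 1 / INR j)).
    fold (harm N). unfold Rdiv. lra.
  - rewrite <- (sum1_const0 N). apply sum1_le. intros j Hj. apply (Hterm j Hj).
Qed.

Lemma sum1_Hquad_add_div M :
  sum1 M (fun m => Hquad (x + INR m) / (INR m * INR (S m))) =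
  Hquad x * (1 - 1 / INR (S M))
  + 2 * H x * (sum1 M (Hm_term 1 x) / x - phi M / INR (S M))
  + (2 / x * (sum1 M (Hm_term 2 x) + x * rem M) - (phi M ^ 2 + psi M) / INR (S M)).
Proof.
  rewrite (sum1_ext M _ (fun m => Hquad x * (1 / (INR m * INR (S m)))
     + 2 * H x * (phi m / (INR m * INR (S m)))
     + (phi m ^ 2 + psi m) / (INR m * INR (S m)))).
  - rewrite !sum1_plus, !sum1_scal, sum1_inv_mul_succ, sum1_Hpart_div,
      sum1_Hpart_sqr_div, sum1_Hpart_mul_term.
    unfold Rdiv. ring.
  - intros m Hm. unfold Hquad, H.
    rewrite !Hm_add_nat by (lia || lra).
    pose proof (INR_ge1 m ltac:(lia)). rewrite S_INR. field. lra.
Qed.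

Lemma Hquad_series :
  is_lim_seq (fun M => sum1 M (fun m => Hquad (x + INR m) / (INR m * INR (S m))))
    (Hquad x * (x + 2) / x).
Proof.
  assert (Lphi : is_lim_seq (fun M => phi M / INR (S M)) 0).
  { refine (is_lim_seq_0_le _ _ _ harm_div_succ_cv0). intro M.
    apply div_INR_succ_bounds, Hpart_bounds; lia || lra. }
  assert (Lsq : is_lim_seq (fun M => (phi M ^ 2 + psi M) / INR (S M)) 0).
  { apply (is_lim_seq_0_le _ (fun M => harm M ^ 2 / INR (S M) + harm M / INR (S M))).
    - intro M. unfold Rdiv. rewrite <- Rmult_plus_distr_r. apply div_INR_succ_bounds.
      pose proof (Hpart_bounds 1 x M ltac:(lia) ltac:(lra)).
      pose proof (Hpart_bounds 2 x M ltac:(lia) ltac:(lra)).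
      assert (phi M ^ 2 <= harm M ^ 2) by (apply pow_incr; lra).
      nra.
    - replace (Finite 0) with (Finite (0 + 0)) by (f_equal; ring).
      exact (is_lim_seq_plus' _ _ _ _ harm_sqr_div_succ_cv0 harm_div_succ_cv0). }
  assert (Lrem : is_lim_seq rem 0).
  { apply is_lim_seq_abs_0.
    apply (is_lim_seq_0_le _ (fun M => 2 * (harm M / INR (S M)))).
    - intro M. split; [apply Rabs_pos|]. pose proof (rem_bound M). unfold Rdiv in *. lra.
    - replace (Finite 0) with (Finite (2 * 0)) by (f_equal; ring).
      exact (is_lim_seq_mult' _ _ _ _ (is_lim_seq_const 2) harm_div_succ_cv0). }
  apply (is_lim_seq_ext _ _ _ (fun M => eq_sym (sum1_Hquad_add_div M))).
  replace (Hquad x * (x + 2) / x) with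
    (Hquad x * (1 - 0) + 2 * H x * (H x / x - 0) + (2 / x * (Hm 2 x + x * 0) - 0))
    by (unfold Hquad; field; lra).
  apply is_lim_seq_plus'; [apply is_lim_seq_plus'|];
    [apply is_lim_seq_mult'; [apply is_lim_seq_const|] ..|].
  - apply is_lim_seq_minus'; [apply is_lim_seq_const|].
    apply (is_lim_seq_ext (fun M => / INR (S M))); [intro; unfold Rdiv; ring|].
    exact is_lim_seq_inv_succ.
  - apply is_lim_seq_minus'; [|exact Lphi].
    apply is_lim_seq_div'; [apply Hm_is_lim_seq; lia || lra| apply is_lim_seq_const| lra].
  - apply is_lim_seq_minus'; [|exact Lsq].
    apply is_lim_seq_mult'; [apply is_lim_seq_const|].
    apply is_lim_seq_plus'; [apply Hm_is_lim_seq; lia || lra|].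
    apply is_lim_seq_mult'; [apply is_lim_seq_const| exact Lrem].
Qed.

End HquadSeries.

(** * Telescoping *)

Definition Hcube (y : R) : R := H y ^ 3 + 3 * H y * Hm 2 y + 2 * Hm 3 y.

Lemma Hcube_succ c : 0 <= c -> Hcube (c + 1) = Hcube c + 3 * Hquad (c + 1) / (c + 1).
Proof.
  intro hc. unfold Hcube, Hquad, H.
  rewrite !(Hm_succ 1 c), !(Hm_succ 2 c), !(Hm_succ 3 c) by (lia || lra).
  field. lra.
Qed.

(* The right-hand side of the theorem is [(antidiff alpha r - antidiff alpha k) / (k - r)]. *)
Definition antidiff (alpha : R) (j : nat) : R :=
  (alpha - INR j) *
  (Hcube (alpha - INR j) / (alpha - INR j)
   - sum1 j (fun t => Hquad (alpha + INR t - INR j) / (INR t * (alpha + INR t - INR j)))).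

Lemma antidiff_sub_succ alpha j : INR (S j) < alpha ->
  antidiff alpha j - antidiff alpha (S j) =
  Hquad (alpha - INR j) * (alpha - INR j + 2) / (alpha - INR j)
  - sum1 j (fun m => Hquad (alpha - INR j + INR m) / (INR m * INR (S m))).
Proof.
  intro Hal. unfold antidiff. rewrite S_INR in *.
  set (x := alpha - INR j). set (c := alpha - (INR j + 1)).
  assert (Hxc : x = c + 1) by (unfold x, c; ring).
  assert (hc : 0 < c) by (unfold c; lra).
  rewrite (sum1_ext j (fun t => Hquad (alpha + INR t - INR j) / (INR t * (alpha + INR t - INR j)))
             (fun t => Hquad (x + INR t) / (INR t * (x + INR t))))
    by (intros t _; unfold x;
        now replace (alpha + INR t - INR j) with (alpha - INR j + INR t) by ring).
  rewrite sum1_succ_l.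
  rewrite (sum1_ext j (fun t => Hquad (alpha + INR (S t) - (INR j + 1))
                                 / (INR (S t) * (alpha + INR (S t) - (INR j + 1))))
             (fun t => Hquad (x + INR t) / ((INR t + 1) * (x + INR t))))
    by (intros t _; rewrite S_INR; unfold x;
        now replace (alpha + (INR t + 1) - (INR j + 1)) with (alpha - INR j + INR t) by ring).
  replace (alpha + INR 1 - (INR j + 1)) with x by (unfold x; simpl; ring).
  rewrite (sum1_ext j (fun m => Hquad (x + INR m) / (INR m * INR (S m)))
     (fun t => x * (Hquad (x + INR t) / (INR t * (x + INR t)))
               + - c * (Hquad (x + INR t) / ((INR t + 1) * (x + INR t))))).
  2:{ intros t Ht. pose proof (INR_ge1 t ltac:(lia)). rewrite S_INR, Hxc. field. lra. }
  rewrite sum1_plus, !sum1_scal.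
  assert (Hb : Hcube x = Hcube c + 3 * Hquad x / x) by (rewrite Hxc; apply Hcube_succ; lra).
  rewrite Hb. clearbody x c. subst x. simpl INR. field. lra.
Qed.

Lemma Hquad_series_consecutive alpha j : INR (S j) < alpha ->
  is_lim_seq
    (fun N => sum1 N (fun n => Hquad (INR n + alpha) / ((INR n + INR j) * (INR n + INR (S j)))))
    (antidiff alpha j - antidiff alpha (S j)).
Proof.
  intro Hal. rewrite antidiff_sub_succ by exact Hal.
  set (g := fun m => Hquad (alpha - INR j + INR m) / (INR m * INR (S m))).
  pose proof (Hquad_series (alpha - INR j) ltac:(rewrite S_INR in Hal; lra)) as Hs.
  apply (is_lim_seq_incr_n _ j) in Hs.
  pose proof (is_lim_seq_minus' _ _ _ _ Hs (is_lim_seq_const (sum1 j g))) as Hshift.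
  refine (is_lim_seq_ext _ _ _ _ Hshift). intro N.
  rewrite <- sum1_shift. apply sum1_ext. intros n _. unfold g.
  rewrite !S_INR, !plus_INR.
  replace (alpha - INR j + (INR n + INR j)) with (INR n + alpha) by ring.
  f_equal. ring.
Qed.

Lemma Hquad_series_telescope alpha r d : INR (r + d) < alpha ->
  is_lim_seq
    (fun N => sum1 N (fun n =>
       Hquad (INR n + alpha) * (1 / (INR n + INR r) - 1 / (INR n + INR (r + d)))))
    (antidiff alpha r - antidiff alpha (r + d)).
Proof.
  induction d as [|d IH]; intro Hal.
  - rewrite Nat.add_0_r, Rminus_diag.
    apply (is_lim_seq_ext (fun _ => 0)); [|apply is_lim_seq_const].
    intro N. rewrite <- (sum1_const0 N). apply sum1_ext. intros. ring.
  - rewrite Nat.add_succ_r in *.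
    assert (Hd : INR (r + d) < alpha) by (rewrite S_INR in Hal; lra).
    replace (antidiff alpha r - antidiff alpha (S (r + d))) with
      (antidiff alpha r - antidiff alpha (r + d)
       + (antidiff alpha (r + d) - antidiff alpha (S (r + d)))) by ring.
    refine (is_lim_seq_ext _ _ _ _
      (is_lim_seq_plus' _ _ _ _ (IH Hd) (Hquad_series_consecutive alpha (r + d) Hal))).
    intro N. rewrite <- sum1_plus. apply sum1_ext. intros n Hn.
    pose proof (INR_ge1 n ltac:(lia)). pose proof (pos_INR r). pose proof (pos_INR (r + d)).
    rewrite !S_INR. field. repeat split; lra.
Qed.

Lemma Hquad_series_pair alpha r k : (r < k)%nat -> INR k < alpha ->
  is_lim_seq
    (fun N => sum1 N (fun n => Hquad (INR n + alpha) / ((INR n + INR r) * (INR n + INR k))))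
    ((antidiff alpha r - antidiff alpha k) / (INR k - INR r)).
Proof.
  intros Hrk Hka. assert (Hlt : INR r < INR k) by (apply lt_INR; exact Hrk).
  replace k with (r + (k - r))%nat in * by lia.
  refine (is_lim_seq_ext _ _ _ _
    (is_lim_seq_div' _ _ _ _ (Hquad_series_telescope alpha r (k - r) Hka)
       (is_lim_seq_const (INR (r + (k - r)) - INR r)) ltac:(lra))).
  intro N. unfold Rdiv at 1. rewrite Rmult_comm, <- sum1_scal. apply sum1_ext. intros n Hn.
  pose proof (INR_ge1 n ltac:(lia)). pose proof (pos_INR r).
  field. repeat split; lra.
Qed.

Theorem theorem2p6 (r k : nat) (alpha : R)
  (hrk : (r < k)%nat) (hka : INR k < alpha) :
  infinite_sum
    (fun n : nat =>
       let m := INR (S n) in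
       (H (m + alpha) ^ 2 + Hm 2 (m + alpha)) / ((m + INR r) * (m + INR k)))
    ((INR k - alpha) / (INR k - INR r) *
       ((H (alpha - INR k) ^ 3 + 3 * H (alpha - INR k) * Hm 2 (alpha - INR k)
          + 2 * Hm 3 (alpha - INR k)) / (alpha - INR k)
        - sum1 k (fun j => (H (alpha + INR j - INR k) ^ 2 + Hm 2 (alpha + INR j - INR k))
                            / (INR j * (alpha + INR j - INR k))))
     + (alpha - INR r) / (INR k - INR r) *
       ((H (alpha - INR r) ^ 3 + 3 * H (alpha - INR r) * Hm 2 (alpha - INR r)
          + 2 * Hm 3 (alpha - INR r)) / (alpha - INR r)
        - sum1 r (fun j => (H (alpha + INR j - INR r) ^ 2 + Hm 2 (alpha + INR j - INR r))
                            / (INR j * (alpha + INR j - INR r))))).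
Proof.
  assert (Hlt : INR r < INR k) by (apply lt_INR; exact hrk).
  match goal with |- infinite_sum _ ?v =>
    replace v with ((antidiff alpha r - antidiff alpha k) / (INR k - INR r))
      by (unfold antidiff, Hcube, Hquad; field; repeat split; lra) end.
  exact (infinite_sum_of_sum1 _ _ (Hquad_series_pair alpha r k hrk hka)).
Qed.
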